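(* For all formulas of $\mathbf{L_1}$: if $\vdash_T F[A_+]$ and $\vdash_T G[A_-]$, then $\vdash_T F[\ {}_+]\vee G[\ {}_-]$ (whenever this is a formula, i.e. not both removals are empty). Thus the cut rule is admissible in the tableau calculus for $\mathbf{L_1}$.
   Context: Formulas of $\mathbf{L_1}$: built from atomic formulas $\epsilon ab$ ($a,b$ name variables, possibly equal) with connectives $\vee,\sim$. Disjunctions may be associated in any way. Positive/negative parts (occurrences): $A$ is a positive part of $A$; if $B\vee C$ is a positive part then $B,C$ are positive parts; if $\sim B$ is a positive part then $B$ is a negative part; if $\sim B$ is a negative part then $B$ is a positive part. $F[B_+]$ ($G[B_-]$) denotes a formula with a specified occurrence of $B$ as positive (negative) part; $F[B_+,C_-]$ etc. denote specified non-overlapping occurrences. Removal: $F[\ {}_+]$ (resp. $G[\ {}_-]$) is the formula or empty expression obtained by deleting the specified occurrence: if $F[A_+]$ is $A$ then $F[\ {}_+]$ is empty; if $F[A_+]$ is $F_1[(A\vee B)_+]$ or $F_1[(B\vee A)_+]$ then $F[\ {}_+]=F_1[B_+]$; if $F[A_+]$ is $G_1[(\sim A)_-]$ then $F[\ {}_+]=G_1[\ {}_-]$; if $G[A_-]$ is $F_1[(\sim A)_+]$ then $G[\ {}_-]=F_1[\ {}_+]$. The disjunction of the empty expression with a formula $C$ is $C$. Tableaux: reduction rules ($\vee_-$) $G[B\vee C_-]$ $\mapsto$ two branches $G[B\vee C_-]\vee\sim B$, $G[B\vee C_-]\vee\sim C$; ($\epsilon_1$) $G[\epsilon ab_-]\mapsto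 G[\epsilon ab_-]\vee\sim\epsilon aa$; ($\epsilon_2$) $G[\epsilon ab_-,\epsilon bc_-]\mapsto G[\epsilon ab_-,\epsilon bc_-]\vee\sim\epsilon ac$; ($\epsilon_{3b}$) $G[\epsilon ab_-,\epsilon bb_-]\mapsto G[\epsilon ab_-,\epsilon bb_-]\vee\sim\epsilon ba$. A tableau for $A$ is a finite tree with root $A$ whose non-leaf nodes have as children the result of applying one rule. A branch is closed if its last formula has the form $F[B_+,B_-]$; a tableau is closed if all branches are. $\vdash_T A$: $A$ has a closed tableau. *)

From Stdlib Require Import List.
Import ListNotations.

Inductive form : Type :=
| Eps : nat -> nat -> form
| Or  : form -> form -> form
| Neg : form -> form.

(* A step of an occurrence path: left/right disjunct, or under a negation. *)
Inductive step : Type := SL | SR | SN.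
Definition path := list step.

(* occ s F p t A : starting at F in polarity s (true = positive),
   following p we reach a part A of polarity t (false = negative).
   Disjunctions are only entered in positive parts, negations anywhere,
   exactly as in the inductive definition of positive/negative parts. *)
Inductive occ : bool -> form -> path -> bool -> form -> Prop :=
| occ_here  : forall s F, occ s F [] s F
| occ_orL   : forall B C p t A, occ true B p t A -> occ true (Or B C) (SL :: p) t A
| occ_orR   : forall B C p t A, occ true C p t A -> occ true (Or B C) (SR :: p) t A
| occ_neg   : forall s B p t A, occ (negb s) B p t A -> occ s (Neg B) (SN :: p) t A.

Definition pos_part (F : form) (p : path) (A : form) : Prop := occ true F p true A.
Definition neg_part (F : form) (p : path) (A : form) : Prop := occ true F p false A.

(* Removal of the occurrence at path p; None = the empty expression.
   Removing A from A\/B or B\/A yields B; removing A from ~A removes ~A. *)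
Fixpoint remove (F : form) (p : path) : option form :=
  match p, F with
  | [], _ => None
  | SL :: q, Or B C =>
      match remove B q with None => Some C | Some B' => Some (Or B' C) end
  | SR :: q, Or B C =>
      match remove C q with None => Some B | Some C' => Some (Or B C') end
  | SN :: q, Neg B =>
      match remove B q with None => None | Some B' => Some (Neg B') end
  | _, _ => Some F   (* ill-formed path; never used for genuine occurrences *)
  end.

Definition odisj (X Y : option form) : option form :=
  match X, Y with
  | Some A, Some B => Some (Or A B)
  | Some A, None => Some A
  | None, Some B => Some B
  | None, None => None
  end.

(* A branch is closed if its last formula has the form F[B+, B-]. *)
Definition closed_formula (F : form) : Prop :=
  exists p q B, pos_part F p B /\ neg_part F q B.

(* provable F : F has a closed tableau (finite tree with root F, each
   non-leaf node's children obtained by one reduction rule, all leaves closed). *)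
Inductive provable : form -> Prop :=
| prov_closed : forall G, closed_formula G -> provable G
| prov_or : forall G p B C,
    neg_part G p (Or B C) ->
    provable (Or G (Neg B)) -> provable (Or G (Neg C)) -> provable G
| prov_eps1 : forall G p a b,
    neg_part G p (Eps a b) ->
    provable (Or G (Neg (Eps a a))) -> provable G
| prov_eps2 : forall G p1 p2 a b c,
    p1 <> p2 -> neg_part G p1 (Eps a b) -> neg_part G p2 (Eps b c) ->
    provable (Or G (Neg (Eps a c))) -> provable G
| prov_eps3b : forall G p1 p2 a b,
    p1 <> p2 -> neg_part G p1 (Eps a b) -> neg_part G p2 (Eps b b) ->
    provable (Or G (Neg (Eps b a))) -> provable G.

(* A valuation interprets each atom [epsilon a b] by a binary relation on
   names; it is a model when that relation satisfies the three conditions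
   behind the rules (eps1), (eps2), (eps3b).  The proof goes through the
   semantics in three parts:
   - soundness: a formula with a closed tableau is true in every model;
   - semantic cut: if F[A+] and G[A-] are valid, then so is
     F[ +] \/ G[ -], since in any model either A is true (and G[ -] holds)
     or A is false (and F[ -] holds);
   - completeness: a valid formula has a closed tableau.  Reductions only
     add negations of formulas from a finite universe (subformulas of the
     root and atoms over its names), so a tableau can be grown until every
     branch is closed or saturated; a saturated open branch G yields the
     model "epsilon a b holds iff it is a negative part of G", which
     falsifies G. *)

From Pilot Require Import Defs.
From Stdlib Require Import List Lia Classical.
Import ListNotations.
(* [remove] refers to the removal of an occurrence, not to [List.remove]. *)
Import Pilot.Defs.

Definition valuation := nat -> nat -> Prop.

Fixpoint eval (v : valuation) (F : form) : Prop :=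
  match F with
  | Eps a b => v a b
  | Or B C => eval v B \/ eval v C
  | Neg B => ~ eval v B
  end.

(* The conditions validating the reduction rules (eps1), (eps2), (eps3b). *)
Definition model (v : valuation) : Prop :=
  (forall a b, v a b -> v a a) /\
  (forall a b c, v a b -> v b c -> v a c) /\
  (forall a b, v a b -> v b b -> v b a).

Definition valid (F : form) : Prop := forall v, model v -> eval v F.

Definition holds (v : valuation) (s : bool) (F : form) : Prop :=
  if s then eval v F else ~ eval v F.

Definition oholds (v : valuation) (s : bool) (o : option form) : Prop :=
  match o with Some F => holds v s F | None => False end.

Lemma holds_negb v s F : holds v (negb s) F <-> ~ holds v s F.
Proof. destruct s; simpl; split; auto; apply NNPP. Qed.

(* If a formula fails with its polarity, so does each of its parts: a false
   disjunction has false disjuncts, and negation flips the polarity. *)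
Lemma occ_refutes v s F p t A :
  occ s F p t A -> ~ holds v s F -> ~ holds v t A.
Proof.
  induction 1 as [| | |s B p t A _ IH]; auto.
  - intros HF. apply IHocc. simpl in *. tauto.
  - intros HF. apply IHocc. simpl in *. tauto.
  - intros HF. apply IH. intros HB. apply HF.
    apply holds_negb in HB. destruct s; simpl in *; tauto.
Qed.

(* A formula with a closed tableau is valid: closed formulas are valid
   because B cannot be both true and false, and each reduction rule adds a
   disjunct [~ X] where X is forced true by the parts it inspects. *)
Lemma soundness F : provable F -> valid F.
Proof.
  induction 1 as [G [p [q [B [Hp Hq]]]]
                 | G p B C Hp _ IH1 _ IH2
                 | G p a b Hp _ IH
                 | G p1 p2 a b c _ H1 H2 _ IH
                 | G p1 p2 a b _ H1 H2 _ IH];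
    intros v Hv; apply NNPP; intros HG;
    change (~ holds v true G) in HG.
  - exact (occ_refutes v _ _ _ _ _ Hq HG (occ_refutes v _ _ _ _ _ Hp HG)).
  - destruct (NNPP _ (occ_refutes v _ _ _ _ _ Hp HG)) as [HB | HC].
    + destruct (IH1 v Hv); tauto.
    + destruct (IH2 v Hv); tauto.
  - pose proof (NNPP _ (occ_refutes v _ _ _ _ _ Hp HG)) as Hab.
    destruct (IH v Hv) as [|Hn]; [tauto | apply Hn, (proj1 Hv a b Hab)].
  - pose proof (NNPP _ (occ_refutes v _ _ _ _ _ H1 HG)) as Hab.
    pose proof (NNPP _ (occ_refutes v _ _ _ _ _ H2 HG)) as Hbc.
    destruct (IH v Hv) as [|Hn]; [tauto | apply Hn, (proj1 (proj2 Hv) a b c Hab Hbc)].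
  - pose proof (NNPP _ (occ_refutes v _ _ _ _ _ H1 HG)) as Hab.
    pose proof (NNPP _ (occ_refutes v _ _ _ _ _ H2 HG)) as Hbb.
    destruct (IH v Hv) as [|Hn]; [tauto | apply Hn, (proj2 (proj2 Hv) a b Hab Hbb)].
Qed.

Lemma remove_splits v s F p t A :
  occ s F p t A -> holds v s F -> oholds v s (remove F p) \/ holds v t A.
Proof.
  induction 1 as [| B C p t A _ IH | B C p t A _ IH | s B p t A _ IH];
    simpl; auto.
  - intros [HB | HC].
    + destruct (IH HB); auto. left. destruct (remove B p); simpl in *; tauto.
    + left. destruct (remove B p); simpl; tauto.
  - intros [HB | HC].
    + left. destruct (remove C p); simpl; tauto.
    + destruct (IH HC); auto. left. destruct (remove C p); simpl in *; tauto.
  - intros HF. assert (HB : holds v (negb s) B)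
      by (apply holds_negb; destruct s; simpl in *; tauto).
    destruct (IH HB) as [HR | HA]; auto. left.
    destruct (remove B p); simpl in *; [destruct s; simpl in *; tauto | tauto].
Qed.

Lemma cut_valid F G A p q :
  pos_part F p A -> neg_part G q A -> valid F -> valid G ->
  forall H, odisj (remove F p) (remove G q) = Some H -> valid H.
Proof.
  intros HF HG VF VG H E v Hv.
  destruct (remove_splits v _ _ _ _ _ HF (VF v Hv)) as [HF' | HA1];
  destruct (remove_splits v _ _ _ _ _ HG (VG v Hv)) as [HG' | HA2];
  destruct (remove F p) as [F' |]; destruct (remove G q) as [G' |];
  simpl in *; inversion E; subst; simpl; tauto.
Qed.

Lemma occ_app s F p t A p' t' X :
  occ s F p t A -> occ t A p' t' X -> occ s F (p ++ p') t' X.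
Proof. induction 1; simpl; intros; try constructor; auto. Qed.

Lemma occ_det s F p t A t' A' :
  occ s F p t A -> occ s F p t' A' -> t = t' /\ A = A'.
Proof.
  intros H; revert t' A'.
  induction H; intros t' A' H'; inversion H'; subst; auto.
Qed.

Definition negp (G X : form) : Prop := exists q, neg_part G q X.

(* No reduction rule can add a formula that is not already a negative part. *)
Definition saturated (G : form) : Prop :=
  (forall B C, negp G (Or B C) -> negp G B \/ negp G C) /\
  (forall a b, negp G (Eps a b) -> negp G (Eps a a)) /\
  (forall p1 p2 a b c, p1 <> p2 -> neg_part G p1 (Eps a b) ->
     neg_part G p2 (Eps b c) -> negp G (Eps a c)) /\
  (forall p1 p2 a b, p1 <> p2 -> neg_part G p1 (Eps a b) ->
     neg_part G p2 (Eps b b) -> negp G (Eps b a)).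

Definition canon (G : form) : valuation := fun a b => negp G (Eps a b).

(* Saturation gives the model conditions; two negative atoms at the same
   path coincide, so the side condition [p1 <> p2] of the rules is harmless. *)
Lemma canon_model G : saturated G -> model (canon G).
Proof.
  intros (_ & S1 & S2 & S3). unfold canon.
  assert (same_path : forall q1 q2 a b a' b', neg_part G q1 (Eps a b) ->
            neg_part G q2 (Eps a' b') -> q1 = q2 -> a = a' /\ b = b').
  { intros q1 q2 a b a' b' H1 H2 ->.
    destruct (occ_det _ _ _ _ _ _ _ H1 H2) as [_ E]. now inversion E. }
  split; [exact S1 | split].
  - intros a b c [q1 H1] [q2 H2].
    destruct (classic (q1 = q2)) as [E | Hne]; [| exact (S2 _ _ _ _ _ Hne H1 H2)].
    destruct (same_path _ _ _ _ _ _ H1 H2 E) as [-> ->]. exists q2; exact H2.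
  - intros a b [q1 H1] [q2 H2].
    destruct (classic (q1 = q2)) as [E | Hne]; [| exact (S3 _ _ _ _ Hne H1 H2)].
    destruct (same_path _ _ _ _ _ _ H1 H2 E) as [-> _]. exists q2; exact H2.
Qed.

Lemma truth_lemma G :
  ~ closed_formula G ->
  (forall B C, negp G (Or B C) -> negp G B \/ negp G C) ->
  forall X, (forall p, pos_part G p X -> ~ eval (canon G) X) /\
            (forall p, neg_part G p X -> eval (canon G) X).
Proof.
  intros Hopen Hor X.
  induction X as [a b | B IHB C IHC | B IHB]; split; simpl.
  - intros p Hp [q Hq]. apply Hopen. exists p, q, (Eps a b). auto.
  - intros p Hp. exists p; exact Hp.
  - intros p Hp [HB | HC].
    + apply (proj1 IHB (p ++ [SL])); auto.
      eapply occ_app; [exact Hp | repeat constructor].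
    + apply (proj1 IHC (p ++ [SR])); auto.
      eapply occ_app; [exact Hp | repeat constructor].
  - intros p Hp. destruct (Hor B C (ex_intro _ p Hp)) as [[q Hq] | [q Hq]].
    + left. exact (proj2 IHB q Hq).
    + right. exact (proj2 IHC q Hq).
  - intros p Hp HB. apply HB, (proj2 IHB (p ++ [SN])).
    eapply occ_app; [exact Hp | repeat constructor].
  - intros p Hp. apply (proj1 IHB (p ++ [SN])).
    eapply occ_app; [exact Hp | repeat constructor].
Qed.

Lemma saturated_not_valid G : ~ closed_formula G -> saturated G -> ~ valid G.
Proof.
  intros Hopen Hsat VG.
  apply (proj1 (truth_lemma G Hopen (proj1 Hsat) G) [] (occ_here true G)).
  exact (VG _ (canon_model G Hsat)).
Qed.

Lemma negp_extend_old G X Y : negp G Y -> negp (Or G (Neg X)) Y.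
Proof. intros [q Hq]. exists (SL :: q). constructor. exact Hq. Qed.

Lemma negp_extend_new G X : negp (Or G (Neg X)) X.
Proof. exists [SR; SN]. repeat constructor. Qed.

Lemma negp_extend_inv G X Y :
  negp (Or G (Neg X)) Y -> negp G Y \/ exists p, occ false X p false Y.
Proof.
  intros [q Hq]. inversion Hq as [| ? ? ? ? ? HG | ? ? ? ? ? HX |]; subst.
  - left. exists p. exact HG.
  - right. inversion HX; subst. eauto.
Qed.

Lemma form_eq_dec (x y : form) : {x = y} + {x <> y}.
Proof. decide equality; apply PeanoNat.Nat.eq_dec. Defined.

Section BoundedSearch.

Variable U : list form.
Variable N : list nat.
Hypothesis U_or : forall B C, In (Or B C) U -> In B U /\ In C U.
Hypothesis U_neg : forall B, In (Neg B) U -> In B U.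
Hypothesis U_names : forall a b, In (Eps a b) U -> In a N /\ In b N.
Hypothesis U_atoms : forall a b, In a N -> In b N -> In (Eps a b) U.

Lemma provable_or_saturated G :
  (forall X, negp G X -> In X U) ->
  (forall X, In X U -> ~ negp G X -> provable (Or G (Neg X))) ->
  provable G \/ saturated G.
Proof.
  intros HU extend.
  destruct (classic (exists B C, negp G (Or B C) /\ ~ negp G B /\ ~ negp G C))
    as [(B & C & [q Hq] & HB & HC) | no_or].
  { left. destruct (U_or B C (HU _ (ex_intro _ q Hq))).
    apply (prov_or G q B C Hq); apply extend; auto. }
  destruct (classic (exists a b, negp G (Eps a b) /\ ~ negp G (Eps a a)))
    as [(a & b & [q Hq] & Ha) | no_eps1].
  { left. apply (prov_eps1 G q a b Hq), extend; auto.
    apply U_atoms; apply (U_names a b (HU _ (ex_intro _ q Hq))). }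
  destruct (classic (exists p1 p2 a b c, p1 <> p2 /\ neg_part G p1 (Eps a b) /\
              neg_part G p2 (Eps b c) /\ ~ negp G (Eps a c)))
    as [(p1 & p2 & a & b & c & Hne & H1 & H2 & Hn) | no_eps2].
  { left. apply (prov_eps2 G p1 p2 a b c Hne H1 H2), extend; auto.
    apply U_atoms; [apply (U_names a b) | apply (U_names b c)];
      apply HU; eexists; eauto. }
  destruct (classic (exists p1 p2 a b, p1 <> p2 /\ neg_part G p1 (Eps a b) /\
              neg_part G p2 (Eps b b) /\ ~ negp G (Eps b a)))
    as [(p1 & p2 & a & b & Hne & H1 & H2 & Hn) | no_eps3].
  { left. apply (prov_eps3b G p1 p2 a b Hne H1 H2), extend; auto.
    apply U_atoms; apply (U_names a b); apply HU; eexists; eauto. }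
  right. repeat split.
  - intros B C H. apply NNPP. intros Hn. apply no_or. exists B, C. tauto.
  - intros a b H. apply NNPP. intros Hn. apply no_eps1. eauto.
  - intros p1 p2 a b c Hne H1 H2. apply NNPP. intros Hn.
    apply no_eps2. exists p1, p2, a, b, c. auto.
  - intros p1 p2 a b Hne H1 H2. apply NNPP. intros Hn.
    apply no_eps3. exists p1, p2, a, b. auto.
Qed.

Lemma occ_in_universe s Y p t Z : occ s Y p t Z -> In Y U -> In Z U.
Proof.
  induction 1; intros HY; auto.
  - apply IHocc, (U_or _ _ HY).
  - apply IHocc, (U_or _ _ HY).
Qed.

(* [R] lists the members of U that may still be added to the branch G:
   every member of U is a negative part of G or in R, and conversely every
   negative part of G is in U. *)
Definition bounded (R : list form) (G : form) : Prop :=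
  (forall Y, In Y U -> negp G Y \/ In Y R) /\ (forall Y, negp G Y -> In Y U).

Lemma bounded_extend R G X :
  In X U -> ~ negp G X -> bounded R G ->
  exists R', length R' < length R /\ bounded R' (Or G (Neg X)).
Proof.
  intros HX HnX [Hcov Hin].
  assert (HR : In X R) by (destruct (Hcov X HX); tauto).
  exists (List.remove form_eq_dec X R). split; [apply remove_length_lt; auto | split].
  - intros Y HY. destruct (Hcov Y HY) as [HG | HRY].
    + left. apply negp_extend_old, HG.
    + destruct (form_eq_dec Y X) as [-> | Hne].
      * left. apply negp_extend_new.
      * right. apply in_in_remove; auto.
  - intros Y HY. destruct (negp_extend_inv G X Y HY) as [HG | [p Hp]].
    + apply Hin, HG.
    + exact (occ_in_universe _ _ _ _ _ Hp HX).
Qed.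

(* Completeness by well-founded growth of the branch, measured by [R]. *)
Lemma complete_bounded n : forall R G,
  length R < n -> bounded R G -> valid G -> provable G.
Proof.
  induction n as [| n IH]; intros R G Hlen HB VG; [lia |].
  destruct (classic (closed_formula G)) as [Hc | Hopen]; [now constructor |].
  assert (extend : forall X, In X U -> ~ negp G X -> provable (Or G (Neg X))).
  { intros X HX HnX.
    destruct (bounded_extend R G X HX HnX HB) as (R' & Hlt & HB').
    apply (IH R'); [lia | exact HB' |].
    intros v Hv. left. exact (VG v Hv). }
  destruct (provable_or_saturated G (proj2 HB) extend) as [Hp | Hsat];
    [exact Hp |].
  exfalso. exact (saturated_not_valid G Hopen Hsat VG).
Qed.

End BoundedSearch.

Fixpoint subs (F : form) : list form :=
  match F with
  | Eps a b => [Eps a b]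
  | Or B C => Or B C :: subs B ++ subs C
  | Neg B => Neg B :: subs B
  end.

Fixpoint names (F : form) : list nat :=
  match F with
  | Eps a b => [a; b]
  | Or B C => names B ++ names C
  | Neg B => names B
  end.

Definition atoms (N : list nat) : list form :=
  flat_map (fun a => map (fun b => Eps a b) N) N.

Definition universe (F : form) : list form := subs F ++ atoms (names F).

Lemma subs_self F : In F (subs F).
Proof. destruct F; simpl; auto. Qed.

Lemma subs_or B C F : In (Or B C) (subs F) -> In B (subs F) /\ In C (subs F).
Proof.
  induction F as [a b | F1 IH1 F2 IH2 | F1 IH]; simpl; intros H.
  - destruct H as [E | []]; discriminate.
  - destruct H as [E | H].
    + inversion E; subst. split; right; apply in_or_app; auto using subs_self.
    + apply in_app_or in H as [H | H];
        [destruct (IH1 H) | destruct (IH2 H)]; split; right; apply in_or_app; auto.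
  - destruct H as [E | H]; [discriminate |]. destruct (IH H); auto.
Qed.

Lemma subs_neg B F : In (Neg B) (subs F) -> In B (subs F).
Proof.
  induction F as [a b | F1 IH1 F2 IH2 | F1 IH]; simpl; intros H.
  - destruct H as [E | []]; discriminate.
  - destruct H as [E | H]; [discriminate |]. right.
    apply in_app_or in H as [H | H]; apply in_or_app; auto.
  - destruct H as [E | H]; [inversion E; subst; auto using subs_self | auto].
Qed.

Lemma subs_names a b F : In (Eps a b) (subs F) -> In a (names F) /\ In b (names F).
Proof.
  induction F as [a' b' | F1 IH1 F2 IH2 | F1 IH]; simpl; intros H.
  - destruct H as [E | []]. inversion E; subst. auto.
  - destruct H as [E | H]; [discriminate |].
    apply in_app_or in H as [H | H];
      [destruct (IH1 H) | destruct (IH2 H)]; split; apply in_or_app; auto.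
  - destruct H as [E | H]; [discriminate | auto].
Qed.

Lemma in_atoms N X :
  In X (atoms N) <-> exists a b, X = Eps a b /\ In a N /\ In b N.
Proof.
  unfold atoms. rewrite in_flat_map. split.
  - intros (a & Ha & H). apply in_map_iff in H as (b & <- & Hb). eauto.
  - intros (a & b & -> & Ha & Hb). exists a. split; auto. apply in_map. auto.
Qed.

Lemma universe_or F B C :
  In (Or B C) (universe F) -> In B (universe F) /\ In C (universe F).
Proof.
  unfold universe. intros H. apply in_app_or in H as [H | H].
  - destruct (subs_or _ _ _ H). split; apply in_or_app; auto.
  - apply in_atoms in H as (? & ? & E & _); discriminate.
Qed.

Lemma universe_neg F B : In (Neg B) (universe F) -> In B (universe F).
Proof.
  unfold universe. intros H. apply in_app_or in H as [H | H].
  - apply in_or_app. left. apply subs_neg, H.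
  - apply in_atoms in H as (? & ? & E & _); discriminate.
Qed.

Lemma universe_names F a b :
  In (Eps a b) (universe F) -> In a (names F) /\ In b (names F).
Proof.
  unfold universe. intros H. apply in_app_or in H as [H | H].
  - apply subs_names, H.
  - apply in_atoms in H as (a' & b' & E & Ha & Hb). inversion E; subst; auto.
Qed.

Lemma universe_atoms F a b :
  In a (names F) -> In b (names F) -> In (Eps a b) (universe F).
Proof. intros Ha Hb. apply in_or_app. right. apply in_atoms. eauto. Qed.

Lemma occ_subs s F p t A : occ s F p t A -> In A (subs F).
Proof.
  induction 1; simpl; auto using subs_self; right; apply in_or_app; auto.
Qed.

(* A valid formula has a closed tableau: start the search at F with the
   whole universe of F as candidates for addition. *)
Lemma completeness F : valid F -> provable F.
Proof.
  intros VF.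
  apply (complete_bounded (universe F) (names F) (universe_or F) (universe_neg F)
           (universe_names F) (universe_atoms F) (S (length (universe F)))
           (universe F) F); [lia | split | exact VF].
  - intros Y HY. right. exact HY.
  - intros Y [q Hq]. apply in_or_app. left. exact (occ_subs _ _ _ _ _ Hq).
Qed.

Theorem theorem8p1 :
  forall (F G A : form) (p q : path),
    pos_part F p A -> neg_part G q A ->
    provable F -> provable G ->
    forall H : form, odisj (remove F p) (remove G q) = Some H ->
    provable H.
Proof.
  intros F G A p q HF HG PF PG H E.
  apply completeness.
  exact (cut_valid F G A p q HF HG (soundness F PF) (soundness G PG) H E).
Qed.
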